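(* Consider the ship dynamics $$M\dot\nu(t) + D(\nu(t))\nu(t) + C(\nu(t))\nu(t) = \tau(t) + \tau_d(t), \qquad \nu=[u,v,r]^\top\in\mathbb{R}^3,$$ with $M$, $D$, $C$, $\kappa_{ij}$, $\sigma$, $\Gamma_1,\Gamma_2,\Gamma_3$ and $T$ as described in the context, and assume $\kappa_{23}\kappa_{32}<\kappa_{22}\kappa_{33}$ (so $\sigma>0$) and $\Gamma_1,\Gamma_2,\Gamma_3>0$. Run the disturbance observer $$\hat\tau_d(t) = \zeta(t) + T\nu(t),\qquad \dot\zeta(t) = -T M^{-1}\big(\tau(t) + \hat\tau_d(t) - D(\nu(t))\nu(t) - C(\nu(t))\nu(t)\big),$$ from an arbitrary initial value $\zeta(0)\in\mathbb{R}^3$, along a solution $(\nu,\zeta)$ defined for $t\ge 0$. If the disturbance $\tau_d$ is constant, then the estimation error $z(t)=\tau_d-\hat\tau_d(t)$ satisfies $$\dot z(t) = -\sigma\,\mathrm{diag}(\Gamma_1,\Gamma_2,\Gamma_3)\, z(t),$$ i.e. $z_i(t)=e^{-\sigma\Gamma_i t}z_i(0)$ for $i=1,2,3$; in particular the error dynamics are globally exponentially stable and $z(t)\to 0$ exponentially, with all three components converging at the common rate $\sigma\Gamma$ when $\Gamma_1=\Gamma_2=\Gamma_3=\Gamma$.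
   Context: $\nu=[u,v,r]^\top$ are the surge, sway and yaw-rate velocities of the ship, $\tau(t)\in\mathbb{R}^3$ is the control input and $\tau_d(t)\in\mathbb{R}^3$ the environmental disturbance (wind, waves, currents). The mass matrix is constant, symmetric, positive definite, of the form $M=\begin{bmatrix} m_{11}&0&0\\0&m_{22}&m_{23}\\0&m_{32}&m_{33}\end{bmatrix}$ with positive entries, and its inverse is written $M^{-1}=\begin{bmatrix} \kappa_{11}&0&0\\0&\kappa_{22}&\kappa_{23}\\0&\kappa_{32}&\kappa_{33}\end{bmatrix}$. $D(\nu)$ is the nonlinear damping matrix $\begin{bmatrix} d_{11}&0&0\\0&d_{22}&d_{23}\\0&d_{32}&d_{33}\end{bmatrix}$ with $d_{11}=-X_u-X_{|u|u}-X_{uuu}u^2$, $d_{22}=-Y_v-Y_{|v|v}-Y_{|r|v}|r|-Y_{vvv}v^2$, $d_{23}=-Y_r-Y_{|v|r}|v|-Y_{|r|r}|r|$, $d_{32}=-N_v-N_{|v|v}|v|-N_{|r|v}|r|$, $d_{33}=-N_r-N_{|v|r}|v|-N_{|r|r}|r|-N_{rrr}r^2$ (real hydrodynamic constants), and $C(\nu)=\begin{bmatrix}0&0&c_{13}\\0&0&c_{23}\\-c_{13}&-c_{23}&0\end{bmatrix}$ with $c_{13}=-m_{22}v-m_{23}r$, $c_{23}=m_{11}u$. Define $\sigma = 1-\frac{\kappa_{23}\kappa_{32}}{\kappa_{22}\kappa_{33}}$, adaptive gains $\Gamma_1,\Gamma_2,\Gamma_3\in\mathbb{R}$, and $$T=\begin{bmatrix}\Gamma_1\frac{\sigma}{\kappa_{11}}&0&0\\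 0&\frac{\Gamma_2}{\kappa_{22}}&-\Gamma_2\frac{\kappa_{23}}{\kappa_{22}\kappa_{33}}\\ 0&-\Gamma_3\frac{\kappa_{32}}{\kappa_{22}\kappa_{33}}&\frac{\Gamma_3}{\kappa_{33}}\end{bmatrix}.$$ *)

From HB Require Import structures.
From mathcomp Require Import all_boot all_order all_algebra.
From mathcomp Require Import all_classical all_reals all_analysis.
Set Implicit Arguments. Unset Strict Implicit. Unset Printing Implicit Defensive.
Import Order.TTheory GRing.Theory Num.Theory.
Import numFieldNormedType.Exports.
Local Open Scope ring_scope.

Record hydro (R : realType) := Hydro {
  X_u : R; X_absu_u : R; X_uuu : R;
  Y_v : R; Y_absv_v : R; Y_absr_v : R; Y_vvv : R;
  Y_r : R; Y_absv_r : R; Y_absr_r : R;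
  N_v : R; N_absv_v : R; N_absr_v : R;
  N_r : R; N_absv_r : R; N_absr_r : R; N_rrr : R }.

Section Defs.
Variable R : realType.

(* Indices: 0 = first (surge u), 1 = second (sway v), 2 = third (yaw rate r). *)
Definition i1 : 'I_3 := @Ordinal 3 0 isT.
Definition i2 : 'I_3 := @Ordinal 3 1 isT.
Definition i3 : 'I_3 := @Ordinal 3 2 isT.

Definition mx3 (a11 a12 a13 a21 a22 a23 a31 a32 a33 : R) : 'M[R]_3 :=
  \matrix_(i < 3, j < 3)
    nth 0 (nth [::] [:: [:: a11; a12; a13]; [:: a21; a22; a23]; [:: a31; a32; a33]] i) j.

Definition Dmat (h : hydro R) (nu : 'cV[R]_3) : 'M[R]_3 :=
  let u := nu i1 0 in let v := nu i2 0 in let r := nu i3 0 in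
  let d11 := - X_u h - X_absu_u h - X_uuu h * u ^+ 2 in
  let d22 := - Y_v h - Y_absv_v h - Y_absr_v h * `|r| - Y_vvv h * v ^+ 2 in
  let d23 := - Y_r h - Y_absv_r h * `|v| - Y_absr_r h * `|r| in
  let d32 := - N_v h - N_absv_v h * `|v| - N_absr_v h * `|r| in
  let d33 := - N_r h - N_absv_r h * `|v| - N_absr_r h * `|r| - N_rrr h * r ^+ 2 in
  mx3 d11 0 0  0 d22 d23  0 d32 d33.

Definition Cmat (M : 'M[R]_3) (nu : 'cV[R]_3) : 'M[R]_3 :=
  let u := nu i1 0 in let v := nu i2 0 in let r := nu i3 0 in
  let c13 := - M i2 i2 * v - M i2 i3 * r in
  let c23 := M i1 i1 * u in
  mx3 0 0 c13  0 0 c23  (- c13) (- c23) 0.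

Definition kappa (M : 'M[R]_3) (i j : 'I_3) : R := invmx M i j.

Definition sigma (M : 'M[R]_3) : R :=
  1 - kappa M i2 i3 * kappa M i3 i2 / (kappa M i2 i2 * kappa M i3 i3).

Definition Tmat (M : 'M[R]_3) (G1 G2 G3 : R) : 'M[R]_3 :=
  let k := kappa M in
  mx3 (G1 * sigma M / k i1 i1) 0 0
      0 (G2 / k i2 i2) (- G2 * k i2 i3 / (k i2 i2 * k i3 i3))
      0 (- G3 * k i3 i2 / (k i2 i2 * k i3 i3)) (G3 / k i3 i3).

Definition Gam (G1 G2 G3 : R) (i : 'I_3) : R := [:: G1; G2; G3]`_i.

Definition Gdiag (G1 G2 G3 : R) : 'M[R]_3 := diag_mx (\row_i Gam G1 G2 G3 i).

Definition posdef (M : 'M[R]_3) : Prop :=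
  forall x : 'cV[R]_3, x != 0 -> 0 < (x^T *m M *m x) 0 0.

End Defs.

From HB Require Import structures.
From mathcomp Require Import all_boot all_order all_algebra.
From mathcomp Require Import all_classical all_reals all_analysis.
From mathcomp Require Import ring.
Import Order.TTheory GRing.Theory Num.Theory.
Import numFieldNormedType.Exports.
Local Open Scope classical_set_scope.
Local Open Scope ring_scope.

(* Since M is surge-decoupled, so is K := M^-1, and the gain T is built so
   that T K = sigma diag(Gamma).  Eliminating the acceleration with the ship
   dynamics, the unknown terms tau, D(nu) nu, C(nu) nu cancel in
   z' = - zeta' - T nu', which leaves z' = - T K z = - sigma diag(Gamma) z.
   Each component then solves a scalar linear ODE: z_i(t) exp(sigma Gamma_i t)
   has zero derivative on ]0, +oo[ and is continuous at 0, hence is constant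
   by the mean value theorem. *)

Lemma ord3P (i : 'I_3) : [\/ i = i1, i = i2 | i = i3].
Proof.
by case: i => [[|[|[|//]]] ?]; [constructor 1|constructor 2|constructor 3]; apply/val_inj.
Qed.

Lemma sum3E {V : nmodType} (F : 'I_3 -> V) : \sum_(j < 3) F j = F i1 + F i2 + F i3.
Proof. by rewrite !big_ord_recr big_ord0 /= add0r; congr (F _ + F _ + F _); apply/val_inj. Qed.

Lemma mulmx3E {R : pzSemiRingType} {m n} (A : 'M[R]_(m, 3)) (B : 'M[R]_(3, n)) i j :
  (A *m B) i j = A i i1 * B i1 j + A i i2 * B i2 j + A i i3 * B i3 j.
Proof. by rewrite mxE sum3E. Qed.

Section MassMatrix.
Context {R : realType}.

Lemma posdef_unitmx {M : 'M[R]_3} : posdef M -> M \in unitmx.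
Proof.
move=> pdM; rewrite unitmxE unitfE; apply/negP => /det0P[v v_neq0 vM0].
by have := pdM v^T; rewrite trmx_eq0 trmxK vM0 mul0mx mxE ltxx => /(_ v_neq0).
Qed.

Definition surge_decoupled (M : 'M[R]_3) : Prop :=
  [/\ M i1 i2 = 0, M i1 i3 = 0, M i2 i1 = 0 & M i3 i1 = 0].

Section Inverse.
Context {M : 'M[R]_3} (uM : M \in unitmx) (dM : surge_decoupled M).
Let K := invmx M.

Let MK i j : M i i1 * K i1 j + M i i2 * K i2 j + M i i3 * K i3 j = (i == j)%:R.
Proof. by rewrite -mulmx3E mulmxV // mxE. Qed.

Let KM i j : K i i1 * M i1 j + K i i2 * M i2 j + K i i3 * M i3 j = (i == j)%:R.
Proof. by rewrite -mulmx3E mulVmx // mxE. Qed.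

Lemma invmx_surge_decoupled : M i1 i1 != 0 -> surge_decoupled K.
Proof.
case: dM => m12 m13 m21 m31 m11; split; apply/eqP.
- by have := MK i1 i2; rewrite m12 m13 !mul0r !addr0 => /eqP; rewrite mulf_eq0 (negPf m11).
- by have := MK i1 i3; rewrite m12 m13 !mul0r !addr0 => /eqP; rewrite mulf_eq0 (negPf m11).
- by have := KM i2 i1; rewrite m21 m31 !mulr0 !addr0 => /eqP; rewrite mulf_eq0 (negPf m11) orbF.
- by have := KM i3 i1; rewrite m21 m31 !mulr0 !addr0 => /eqP; rewrite mulf_eq0 (negPf m11) orbF.
Qed.

Lemma invmx_diag_neq0 :
  M i2 i2 != 0 -> M i3 i3 != 0 -> [/\ K i1 i1 != 0, K i2 i2 != 0 & K i3 i3 != 0].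
Proof.
case: dM => m12 m13 m21 m31 m22 m33; split; apply/eqP => k0.
- by have := KM i1 i1; rewrite m21 m31 k0 !mulr0 !mul0r !addr0 => /eqP; rewrite eq_sym oner_eq0.
- have k32 : K i3 i2 = 0.
    apply/eqP; have := MK i3 i2; rewrite k0 m31 !mulr0 !mul0r !add0r => /eqP.
    by rewrite mulf_eq0 (negPf m33).
  by have := MK i2 i2; rewrite m21 k0 k32 !mulr0 !mul0r !addr0 => /eqP; rewrite eq_sym oner_eq0.
- have k23 : K i2 i3 = 0.
    apply/eqP; have := MK i2 i3; rewrite k0 m21 !mulr0 !mul0r !add0r addr0 => /eqP.
    by rewrite mulf_eq0 (negPf m22).
  by have := MK i3 i3; rewrite m31 k0 k23 !mulr0 !mul0r !addr0 => /eqP; rewrite eq_sym oner_eq0.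
Qed.
End Inverse.

Lemma Tmat_mulmx_invmx (M : 'M[R]_3) (G1 G2 G3 : R) :
  surge_decoupled (invmx M) ->
  [/\ kappa M i1 i1 != 0, kappa M i2 i2 != 0 & kappa M i3 i3 != 0] ->
  Tmat M G1 G2 G3 *m invmx M = sigma M *: Gdiag G1 G2 G3.
Proof.
rewrite /Tmat /sigma /kappa => -[k12 k13 k21 k31] [k11 k22 k33].
apply/matrixP => i j; rewrite mulmx3E /Gdiag !mxE.
by case: (ord3P i) => ->; case: (ord3P j) => ->;
  rewrite /= ?k12 ?k13 ?k21 ?k31 /Gam /=; field; rewrite ?k11 ?k22 ?k33.
Qed.
End MassMatrix.

Lemma observer_error_eq {R : pzRingType} {n} {M K T : 'M[R]_n}
    {nud zetad tau taud taud_hat p q : 'cV[R]_n} :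
  K *m M = 1%:M ->
  M *m nud + p + q = tau + taud ->
  zetad = - (T *m K *m (tau + taud_hat - p - q)) ->
  - zetad - T *m nud = - (T *m K) *m (taud - taud_hat).
Proof.
move=> KM dyn ->; have -> : nud = K *m (tau + taud - p - q).
  by rewrite -dyn addrAC !addrK mulmxA KM mul1mx.
rewrite opprK mulmxA -mulmxBr mulNmx -mulmxN; congr (_ *m _).
rewrite -!(addrA _ (- p)) -!opprD.
by rewrite [in RHS]opprB [in LHS]opprB subrKA [tau + _]addrC addrKA.
Qed.

Section Entrywise.
Context {R : realType}.

Definition is_derive_entries {n} (t : R) (f : R -> 'cV[R]_n) (df : 'cV[R]_n) : Prop :=
  forall i, is_derive t 1 (fun s => f s i 0) (df i 0).

Definition cvg_entries {n} (F : set_system R) (f : R -> 'cV[R]_n) (l : 'cV[R]_n) : Prop :=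
  forall i, f s i 0 @[s --> F] --> l i 0.

Lemma mulmx_entry_sumE {m n} (A : 'M[R]_(m, n)) (f : R -> 'cV[R]_n) i :
  (fun s => (A *m f s) i 0) = \sum_j (fun s => A i j * f s j 0).
Proof. by apply/funext => s; rewrite mxE fct_sumE. Qed.

Lemma is_derive_entries_cst {n} (t : R) (c : 'cV[R]_n) : is_derive_entries t (fun=> c) 0.
Proof. by move=> i; rewrite mxE; exact: is_derive_cst. Qed.

Lemma is_derive_entriesD {n t} {f g : R -> 'cV[R]_n} {df dg} :
  is_derive_entries t f df -> is_derive_entries t g dg ->
  is_derive_entries t (fun s => f s + g s) (df + dg).
Proof. by move=> fdf gdg i; rewrite mxE; under eq_fun do rewrite mxE; exact: is_deriveD. Qed.

Lemma is_derive_entriesB {n t} {f g : R -> 'cV[R]_n} {df dg} :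
  is_derive_entries t f df -> is_derive_entries t g dg ->
  is_derive_entries t (fun s => f s - g s) (df - dg).
Proof. by move=> fdf gdg i; rewrite !mxE; under eq_fun do rewrite !mxE; exact: is_deriveB. Qed.

Lemma is_derive_entries_mulmx {m n} (A : 'M[R]_(m, n)) {t f df} :
  is_derive_entries t f df -> is_derive_entries t (fun s => A *m f s) (A *m df).
Proof.
move=> fdf i; rewrite mxE mulmx_entry_sumE.
by apply: is_derive_sum => j; exact: is_deriveZ.
Qed.

Section Limits.
Context {F : set_system R} {FF : Filter F}.

Lemma cvg_entries_cst {n} (c : 'cV[R]_n) : cvg_entries F (fun=> c) c.
Proof. by move=> i; exact: cvg_cst. Qed.

Lemma cvg_entriesD {n} {f g : R -> 'cV[R]_n} {a b} :
  cvg_entries F f a -> cvg_entries F g b -> cvg_entries F (fun s => f s + g s) (a + b).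
Proof. by move=> fa gb i; rewrite mxE; under eq_fun do rewrite mxE; exact: cvgD. Qed.

Lemma cvg_entriesB {n} {f g : R -> 'cV[R]_n} {a b} :
  cvg_entries F f a -> cvg_entries F g b -> cvg_entries F (fun s => f s - g s) (a - b).
Proof. by move=> fa gb i; rewrite !mxE; under eq_fun do rewrite !mxE; exact: cvgB. Qed.

Lemma cvg_entries_mulmx {m n} (A : 'M[R]_(m, n)) {f l} :
  cvg_entries F f l -> cvg_entries F (fun s => A *m f s) (A *m l).
Proof.
move=> fl i; rewrite mxE mulmx_entry_sumE.
apply: (big_ind2 (fun g a => g @ F --> a)) => [|g a h b ga hb|j _].
- exact: (cvg_cst (0 : R)).
- exact: cvgD.
- by apply: cvgM => //; exact: cvg_cst.
Qed.
End Limits.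
End Entrywise.

Lemma is_derive1_continuous {R : realType} {f : R -> R} {x df : R} :
  is_derive x 1 f df -> {for x, continuous f}.
Proof. by move=> dfx; apply/differentiable_continuous/derivable1_diffP; exact: ex_derive. Qed.

Lemma linear_ode_expR {R : realType} (c : R) (y : R -> R) :
  y s @[s --> 0^'+] --> y 0 ->
  (forall t : R, 0 < t -> is_derive t 1 y (- c * y t)) ->
  forall t : R, 0 <= t -> y t = expR (- c * t) * y 0.
Proof.
move=> y0 dy t t_ge0.
pose g s := expR (c * s) * y s.
have dexp (s : R) : is_derive s 1 (fun s => expR (c * s)) (expR (c * s) * c).
  have := is_derive1_comp (is_derive_expR (c * s)) (is_deriveZ c (is_derive_id s 1)).
  by rewrite /GRing.scale /= mulr1.
have dg (s : R) : 0 < s -> is_derive s 1 g 0.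
  move=> s_gt0; have := is_deriveM (dexp s) (dy s s_gt0).
  by congr (is_derive _ _ _ _); rewrite /GRing.scale /=; ring.
have cg : {within `[0, +oo[, continuous g}.
  apply/continuous_within_itvcyP; split.
  - by move=> x; rewrite in_itv /= andbT => /dg/is_derive1_continuous.
  - apply: cvgM y0; apply: cvg_at_right_filter.
    exact: is_derive1_continuous (dexp 0).
have dg' x : x \in `]0, t[ -> is_derive x 1 g 0.
  by rewrite in_itv /= => /andP[/dg].
have sub : `[0, t] `<=` `[0, +oo[ by apply: subset_itvl; rewrite bnd_simp.
have [x _] := MVT_segment t_ge0 dg' (continuous_subspaceW sub cg).
rewrite mul0r => /eqP; rewrite subr_eq0 /g mulr0 expR0 mul1r => /eqP gt_y0.
by rewrite -gt_y0 mulrA -expRD mulNr addNr expR0 mul1r.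
Qed.

Theorem mainTheorem1 (R : realType) (M : 'M[R]_3) (h : hydro R)
  (G1 G2 G3 : R)
  (tau : R -> 'cV[R]_3) (taud : 'cV[R]_3)
  (nu zeta nudot zetadot : R -> 'cV[R]_3) :
  (* structure of the mass matrix: constant, symmetric, positive definite *)
  M i1 i2 = 0 -> M i1 i3 = 0 -> M i2 i1 = 0 -> M i3 i1 = 0 ->
  0 < M i1 i1 -> 0 < M i2 i2 -> 0 < M i2 i3 -> 0 < M i3 i2 -> 0 < M i3 i3 ->
  M^T = M -> posdef M ->
  (* kappa23 kappa32 < kappa22 kappa33 and positive gains *)
  kappa M i2 i3 * kappa M i3 i2 < kappa M i2 i2 * kappa M i3 i3 ->
  0 < G1 -> 0 < G2 -> 0 < G3 ->
  (* nudot, zetadot are the time derivatives of nu, zeta for t > 0 *)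
  (forall t : R, 0 < t -> forall i : 'I_3,
      is_derive t 1 (fun s => nu s i 0) (nudot t i 0)) ->
  (forall t : R, 0 < t -> forall i : 'I_3,
      is_derive t 1 (fun s => zeta s i 0) (zetadot t i 0)) ->
  (* the solution is continuous at t = 0 from the right *)
  (forall i : 'I_3, nu s i 0 @[s --> 0^'+] --> nu 0 i 0) ->
  (forall i : 'I_3, zeta s i 0 @[s --> 0^'+] --> zeta 0 i 0) ->
  (* ship dynamics with constant disturbance taud *)
  (forall t : R, 0 < t ->
      M *m nudot t + Dmat h (nu t) *m nu t + Cmat M (nu t) *m nu t
      = tau t + taud) ->
  (* disturbance observer *)
  (forall t : R, 0 < t ->
      zetadot t = - (Tmat M G1 G2 G3 *m invmx M *m
        (tau t + (zeta t + Tmat M G1 G2 G3 *m nu t)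
         - Dmat h (nu t) *m nu t - Cmat M (nu t) *m nu t))) ->
  let z := fun t => taud - (zeta t + Tmat M G1 G2 G3 *m nu t) in
  (forall t : R, 0 < t -> forall i : 'I_3,
      is_derive t 1 (fun s => z s i 0)
        (((- sigma M) *: Gdiag G1 G2 G3 *m z t) i 0)) /\
  (forall t : R, 0 <= t -> forall i : 'I_3,
      z t i 0 = expR (- sigma M * Gam G1 G2 G3 i * t) * z 0 i 0).
Proof.
(* Symmetry of M, the signs of M23 and M32, the kappa condition and the
   positivity of the gains are unused: they only make the rates sigma Gamma_i
   positive. *)
move=> m12 m13 m21 m31 m11 m22 _ _ m33 _ pdM _ _ _ _ dnu dzeta cnu czeta dyn obs z.
set T := Tmat M G1 G2 G3.
have dM : surge_decoupled M by [].
have uM := posdef_unitmx pdM.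
have TK : T *m invmx M = sigma M *: Gdiag G1 G2 G3.
  apply: Tmat_mulmx_invmx; first exact: invmx_surge_decoupled uM dM (lt0r_neq0 m11).
  exact: invmx_diag_neq0 uM dM (lt0r_neq0 m22) (lt0r_neq0 m33).
have dz t : 0 < t -> is_derive_entries t z ((- sigma M) *: Gdiag G1 G2 G3 *m z t).
  move=> t_gt0; rewrite scaleNr -TK.
  rewrite -(observer_error_eq (mulVmx uM) (dyn t t_gt0) (obs t t_gt0)).
  have -> : - zetadot t - T *m nudot t = 0 - (zetadot t + T *m nudot t).
    by rewrite sub0r opprD.
  apply: is_derive_entriesB (is_derive_entries_cst t taud) (is_derive_entriesD _ _).
    exact: dzeta.
  exact: is_derive_entries_mulmx (dnu t t_gt0).
split=> // t t_ge0 i.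
rewrite mulNr; apply: (linear_ode_expR _ (fun s => z s i 0)) => // [|s s_gt0].
- exact: cvg_entriesB (cvg_entries_cst taud) (cvg_entriesD czeta (cvg_entries_mulmx T cnu)) i.
- have := dz s s_gt0 i; rewrite -scalemxAl mxE mul_diag_mx !mxE.
  by rewrite mulrA mulNr.
Qed.
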